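(* Let $W$ be a set of $n$ workers and $F$ a set of $n$ firms ($n\ge 2$), each worker $w$ having a strict complete preference order $\succ_w$ over $F$ and each firm $f$ a strict complete preference order $\succ_f$ over $W$; call this instance $P$. (1) The normal form of $P$ is uniquely defined: every maximal sequence of single deletion steps (defined in the context) applied starting from the full lists terminates with the same collection of lists, namely the normal form lists $L^*_w$, $L^*_f$, no matter in which order the steps are performed. (2) Suppose $f\in L^*_w$ and $w\in L^*_f$. Then either the pair $(w,f)$ belongs to some stable matching of $P$, or there exist firms $f_{j_1},f_{j_2}\in L^*_w$ with $f_{j_1}\succ_w f\succ_w f_{j_2}$ and workers $w_{i_1},w_{i_2}\in L^*_f$ with $w_{i_1}\succ_f w\succ_f w_{i_2}$.
   Context: A matching is a bijection $\mu$ pairing each worker with exactly one firm and each firm with exactly one worker. A worker $w$ and firm $f$ form a blocking pair for $\mu$ if $f\succ_w \mu(w)$ and $w\succ_f\mu(f)$; $\mu$ is stable if it has no blocking pair. Normal form (simultaneous IDUA): start with lists $L^0_w=F$, $L^0_f=W$. Given lists $L^{k-1}$ (with $f\in L^{k-1}_w$ iff $w\in L^{k-1}_f$), a pair $(w,f)$ with $f\in L^{k-1}_w$ is mutually unattractive at round $k$ if either (i) there is $f'\in L^{k-1}_w$ with $f'\succ_w f$ and $w$ is the $\succ_{f'}$-maximal element of $L^{k-1}_{f'}$, or (ii) there is $w'\in L^{k-1}_f$ with $w'\succ_f w$ and $f$ is the $\succ_{w'}$-maximal element of $L^{k-1}_{w'}$. $L^k$ is obtained from $L^{k-1}$ by removing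 $f$ from $L^{k-1}_w$ and $w$ from $L^{k-1}_f$ for every such pair. The normal form lists $L^*_w,L^*_f$ are the lists at the first $k$ with $L^{k+1}=L^k$, ordered by the original preferences. Single deletion step (on current lists with $f\in L_w$ iff $w\in L_f$): choose a current pair $(w,f)$ (with $f\in L_w$) such that either $w$ is the $\succ_f$-maximal element of $L_f$, in which case remove every pair $(w,f'')$ with $f\succ_w f''$ (i.e. remove $f''$ from $L_w$ and $w$ from $L_{f''}$), or $f$ is the $\succ_w$-maximal element of $L_w$, in which case remove every pair $(w'',f)$ with $w\succ_f w''$. A maximal sequence continues until no step removes any pair. *)

From mathcomp Require Import all_boot all_order all_fingroup.
Set Implicit Arguments. Unset Strict Implicit. Unset Printing Implicit Defensive.

(* A strict complete preference order on a finite set: r x y means x is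
   strictly preferred to y. *)
Definition strict_pref (T : finType) (r : rel T) : Prop :=
  irreflexive r /\ transitive r /\ (forall x y, x != y -> r x y || r y x).

Section Matching.
Variable n : nat.
(* workers and firms are both indexed by 'I_n *)
Variables (pw : 'I_n -> rel 'I_n)  (* pw w f f' : f >_w f' *)
          (pf : 'I_n -> rel 'I_n). (* pf f w w' : w >_f w' *)

(* Current lists, as the set of acceptable pairs (w, f); then
   f \in L_w  iff  w \in L_f  holds by construction. *)
Definition Lw (E : {set 'I_n * 'I_n}) (w : 'I_n) : {set 'I_n} := [set f | (w, f) \in E].
Definition Lf (E : {set 'I_n * 'I_n}) (f : 'I_n) : {set 'I_n} := [set w | (w, f) \in E].

Definition full : {set 'I_n * 'I_n} := setT.

Definition top_w (E : {set 'I_n * 'I_n}) (w f : 'I_n) : bool :=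
  (f \in Lw E w) && [forall f', ((f' \in Lw E w) && (f' != f)) ==> pw w f f'].
Definition top_f (E : {set 'I_n * 'I_n}) (f w : 'I_n) : bool :=
  (w \in Lf E f) && [forall w', ((w' \in Lf E f) && (w' != w)) ==> pf f w w'].

Definition mut_unattr (E : {set 'I_n * 'I_n}) (w f : 'I_n) : bool :=
  ((w, f) \in E) &&
  ([exists f', [&& f' \in Lw E w, pw w f' f & top_f E f' w]] ||
   [exists w', [&& w' \in Lf E f, pf f w' w & top_w E w' f]]).

Definition idua_round (E : {set 'I_n * 'I_n}) : {set 'I_n * 'I_n} :=
  E :\: [set p | mut_unattr E p.1 p.2].

Definition is_normal_form (E : {set 'I_n * 'I_n}) : Prop :=
  exists k, E = iter k idua_round full /\ idua_round E = E /\
    (forall j, j < k -> iter j.+1 idua_round full != iter j idua_round full).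

Definition del_step (E E' : {set 'I_n * 'I_n}) : Prop :=
  exists w f, (w, f) \in E /\
   ((top_f E f w /\ E' = E :\: [set p | (p.1 == w) && pw w f p.2]) \/
    (top_w E w f /\ E' = E :\: [set p | (p.2 == f) && pf f w p.1])).

Definition eff_step (E E' : {set 'I_n * 'I_n}) : Prop := del_step E E' /\ E' != E.

Fixpoint del_seq (E : {set 'I_n * 'I_n}) (s : seq {set 'I_n * 'I_n}) : Prop :=
  match s with
  | [::] => True
  | E' :: s' => eff_step E E' /\ del_seq E' s'
  end.

Definition maximal_del_seq (s : seq {set 'I_n * 'I_n}) : Prop :=
  del_seq full s /\ ~ (exists E', eff_step (last full s) E').

(* matchings: bijection mu from workers to firms *)
Definition blocking (mu : {perm 'I_n}) (w f : 'I_n) : bool :=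
  pw w f (mu w) && pf f w ((mu^-1)%g f).

Definition stable (mu : {perm 'I_n}) : Prop :=
  forall w f, ~~ blocking mu w f.

End Matching.

From mathcomp Require Import all_boot all_fingroup.
Set Implicit Arguments. Unset Strict Implicit. Unset Printing Implicit Defensive.

(* Call a pair (w, f) of a set E of acceptable pairs deletable if w is the
   first choice of some firm that w prefers to f, or symmetrically. Single
   deletion steps, IDUA rounds and Gale-Shapley rejection rounds remove only
   deletable pairs, and they leave every removed pair dominated: w prefers all
   that is left on its list to f, or f prefers all that is left on its list to
   w. Such removals never touch a stable matching (one exists by Gale-Shapley)
   and keep every pair outside the current set dominated. A reduced set (one
   without deletable pairs) with these two invariants survives every such
   removal from a superset; the IDUA fixed point and the end of a maximal
   deletion sequence are both such sets, so each contains the other.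
   In a reduced set every worker is last on the list of its first choice, so
   giving every worker (or every firm) its first choice is a stable matching.
   Hence a pair of the normal form lies in a stable matching as soon as one of
   its members is first or last on the other's list. *)

Lemma iter_inv (T : Type) (g : T -> T) (P : T -> Prop) :
  (forall x, P x -> P (g x)) -> forall k x, P x -> P (iter k g x).
Proof. by move=> Pg; elim=> // k IH x /IH /Pg. Qed.

Lemma iter_fixed (T : finType) (g : {set T} -> {set T}) :
  (forall E, g E \subset E) -> forall E, exists k, g (iter k g E) = iter k g E.
Proof.
move=> shrink E; elim: {E}_.+1 {-2}E (ltnSn #|E|) => // m IH E.
rewrite ltnS => small.
have [fixE | moved] := eqVneq (g E) E; first by exists 0.
have lt : #|g E| < #|E| by apply: proper_card; rewrite properEneq moved shrink.
have [k fix_k] := IH (g E) (leq_trans lt small).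
by exists k.+1; rewrite !iterSr.
Qed.

Lemma iter_first_fixed (T : finType) (g : {set T} -> {set T}) E :
  (forall E, g E \subset E) ->
  exists k, g (iter k g E) = iter k g E /\
            forall j, j < k -> iter j.+1 g E != iter j g E.
Proof.
move=> shrink.
have /ex_minnP[k /eqP fix_k min_k] : exists k, g (iter k g E) == iter k g E.
  by have [k /eqP] := iter_fixed shrink E; exists k.
by exists k; split=> // j jk; apply/negP => /min_k; rewrite leqNgt jk.
Qed.

Lemma no_proper_descent (T : finType) (s : nat -> {set T}) :
  ~ (forall i, s i.+1 \proper s i).
Proof.
move=> desc; have bound i : #|s i| + i <= #|s 0|.
  elim: i => [|i IH]; first by rewrite addn0.
  by rewrite addnS; apply: leq_trans IH; rewrite ltn_add2r proper_card.
by have := bound #|s 0|.+1; rewrite addnS ltnNge leq_addl.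
Qed.

Section StrictPref.
Variables (T : finType) (r : rel T).
Hypothesis r_pref : strict_pref r.

Lemma pref_irr x : r x x = false.
Proof. by case: r_pref => irr _; apply: irr. Qed.

Lemma pref_trans x y z : r x y -> r y z -> r x z.
Proof. by case: r_pref => _ [tr _]; apply: tr. Qed.

Lemma pref_asym x y : r x y -> r y x = false.
Proof. by move=> rxy; apply/negP => /(pref_trans rxy); rewrite pref_irr. Qed.

Lemma pref_flip x y : x != y -> ~~ r x y -> r y x.
Proof. by case: r_pref => _ [_ tot] /tot /orP[->|]. Qed.

Lemma pref_max_exists (A : {set T}) a : a \in A ->
  exists2 x, x \in A & forall y, y \in A -> y != x -> r x y.
Proof.
move=> aA; pose below x := #|[set y in A | r x y]|.
have [x xA x_max] := arg_maxnP below aA.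
exists x => // y yA /pref_flip; apply; apply/negP => ryx.
have : below x < below y.
  apply: proper_card; apply/properP; split.
    by apply/subsetP => z; rewrite !inE => /andP[-> /(pref_trans ryx)].
  by exists x; rewrite !inE ?ryx ?pref_irr ?andbF ?andbT.
by rewrite ltnNge (x_max y yA : below y <= below x).
Qed.

End StrictPref.

Section Lists.
Variables (n : nat) (pw pf : 'I_n -> rel 'I_n).
Hypotheses (pw_pref : forall w, strict_pref (pw w))
           (pf_pref : forall f, strict_pref (pf f)).
Local Notation pairs := {set 'I_n * 'I_n}.
Implicit Types (E T : pairs) (w v u f g : 'I_n).

Lemma top_wP E w f :
  reflect ((w, f) \in E /\ forall g, (w, g) \in E -> g != f -> pw w f g)
          (top_w pw E w f).
Proof.
rewrite /top_w inE; apply: (iffP andP) => -[wf top]; split=> //.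
- by move=> g wg gf; have := forallP top g; rewrite inE wg gf.
- by apply/forallP => g; apply/implyP; rewrite inE => /andP[]; apply: top.
Qed.

Lemma top_fP E f w :
  reflect ((w, f) \in E /\ forall u, (u, f) \in E -> u != w -> pf f w u)
          (top_f pf E f w).
Proof.
rewrite /top_f inE; apply: (iffP andP) => -[wf top]; split=> //.
- by move=> u uf uw; have := forallP top u; rewrite inE uf uw.
- by apply/forallP => u; apply/implyP; rewrite inE => /andP[]; apply: top.
Qed.

Lemma top_w_in E w f : top_w pw E w f -> (w, f) \in E.
Proof. by case/top_wP. Qed.

Lemma top_f_in E f w : top_f pf E f w -> (w, f) \in E.
Proof. by case/top_fP. Qed.

Lemma top_w_subset E E' w f :
  E' \subset E -> top_w pw E w f -> (w, f) \in E' -> top_w pw E' w f.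
Proof.
by move=> /subsetP sub /top_wP[_ top] wf; apply/top_wP; split=> // g /sub; apply: top.
Qed.

Lemma top_f_subset E E' f w :
  E' \subset E -> top_f pf E f w -> (w, f) \in E' -> top_f pf E' f w.
Proof.
by move=> /subsetP sub /top_fP[_ top] wf; apply/top_fP; split=> // u /sub; apply: top.
Qed.

Lemma top_w_uniq E w f g : top_w pw E w f -> top_w pw E w g -> f = g.
Proof.
move=> /top_wP[wf f_top] /top_wP[wg g_top]; apply/eqP/negPn/negP => fg.
have gf : g != f by rewrite eq_sym.
by have := g_top f wf fg; rewrite (pref_asym (pw_pref w) (f_top g wg gf)).
Qed.

Lemma exists_top_w E w f : (w, f) \in E -> exists g, top_w pw E w g.
Proof.
move=> wf; have fL : f \in Lw E w by rewrite inE.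
have [g gL g_max] := pref_max_exists (pw_pref w) fL.
exists g; apply/top_wP; split=> [|h wh hg]; first by rewrite inE in gL.
by apply: g_max; rewrite ?inE.
Qed.

Definition deletable E w f : bool :=
  [exists f', top_f pf E f' w && pw w f' f] ||
  [exists w', top_w pw E w' f && pf f w' w].

Lemma deletableP E w f :
  reflect ((exists2 f', top_f pf E f' w & pw w f' f) \/
           (exists2 w', top_w pw E w' f & pf f w' w))
          (deletable E w f).
Proof.
apply: (iffP orP) => -[].
- by case/existsP=> f' /andP[t p]; left; exists f'.
- by case/existsP=> w' /andP[t p]; right; exists w'.
- by case=> f' t p; left; apply/existsP; exists f'; rewrite t p.
- by case=> w' t p; right; apply/existsP; exists w'; rewrite t p.
Qed.

Definition reduced T := forall w f, (w, f) \in T -> ~~ deletable T w f.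

Definition dominated E w f :=
  (forall g, (w, g) \in E -> pw w g f) \/ (forall u, (u, f) \in E -> pf f u w).

Definition outside_dominated E := forall w f, (w, f) \notin E -> dominated E w f.

Definition sound_removal E E' := E' \subset E /\
  forall w f, (w, f) \in E -> (w, f) \notin E' -> deletable E w f /\ dominated E' w f.

Definition matching_in (mu : {perm 'I_n}) E := forall w, (w, mu w) \in E.

Lemma dominated_subset E E' w f :
  E' \subset E -> dominated E w f -> dominated E' w f.
Proof. by move=> /subsetP sub [] dom; [left|right] => x /sub; apply: dom. Qed.

Lemma dominated_below_w E w f g :
  pw w f g -> (forall h, (w, h) \in E -> ~~ pw w f h) -> dominated E w g.
Proof.
move=> fg not_below; left=> h wh; have [<-//|fh] := eqVneq f h.
exact: (pref_trans (pw_pref w) (pref_flip (pw_pref w) fh (not_below h wh)) fg).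
Qed.

Lemma dominated_below_f E f v w :
  pf f v w -> (forall u, (u, f) \in E -> ~~ pf f v u) -> dominated E w f.
Proof.
move=> vw not_below; right=> u uf; have [<-//|vu] := eqVneq v u.
exact: (pref_trans (pf_pref f) (pref_flip (pf_pref f) vu (not_below u uf)) vw).
Qed.

Lemma mut_unattrE E w f :
  mut_unattr pw pf E w f = ((w, f) \in E) && deletable E w f.
Proof.
rewrite /mut_unattr /deletable; congr (_ && (_ || _)); apply: eq_existsb => x.
- by case t: top_f; rewrite ?andbF //= inE (top_f_in t) andbT.
- by case t: top_w; rewrite ?andbF //= inE (top_w_in t) andbT.
Qed.

Lemma idua_roundE E : idua_round pw pf E = [set p in E | ~~ deletable E p.1 p.2].
Proof.
by apply/setP => -[w f]; rewrite !inE mut_unattrE /=; case: (_ \in E); rewrite ?andbT.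
Qed.

Lemma stable_not_deletable mu E : stable pw pf mu -> matching_in mu E ->
  forall w, ~~ deletable E w (mu w).
Proof.
move=> mu_stable mu_in w.
apply/deletableP => -[[f /top_fP[_ f_top] wf] | [v /top_wP[_ v_top] vw]].
- set u := (mu^-1)%g f.
  have uf : (u, f) \in E by have := mu_in u; rewrite permKV.
  have uw : u != w.
    by apply/eqP => uw; move: wf; rewrite -uw permKV (pref_irr (pw_pref _)).
  by have /negP := mu_stable w f; rewrite /blocking wf f_top.
- have vw_ne : mu v != mu w.
    by apply/eqP => /perm_inj vw_eq; move: vw; rewrite vw_eq (pref_irr (pf_pref _)).
  by have /negP := mu_stable v (mu w); rewrite /blocking permK vw v_top.
Qed.

Lemma sound_removal_dominated E E' :
  outside_dominated E -> sound_removal E E' -> outside_dominated E'.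
Proof.
move=> dom [sub removed] w f out; have [wf | wf] := boolP ((w, f) \in E).
- by case: (removed w f wf out).
- exact: dominated_subset sub (dom w f wf).
Qed.

Lemma sound_removal_invariant mu : stable pw pf mu -> forall E E',
  matching_in mu E /\ outside_dominated E -> sound_removal E E' ->
  matching_in mu E' /\ outside_dominated E'.
Proof.
move=> mu_stable E E' [mu_in dom] rem.
split; last exact: sound_removal_dominated dom rem.
move=> w; apply/negPn/negP => out; case: rem => _ /(_ w _ (mu_in w) out)[del _].
by case/negP: (stable_not_deletable mu_stable mu_in w).
Qed.

Lemma sound_removal_keeps_reduced mu T :
  matching_in mu T -> outside_dominated T -> reduced T ->
  forall E E', T \subset E -> sound_removal E E' -> T \subset E'.
Proof.
move=> mu_in dom red E E' TE [_ removed]; apply/subsetP => -[w g] wg.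
apply/negPn/negP => out; have [/deletableP del _] := removed w g (subsetP TE _ wg) out.
case: del => [[f f_top fg] | [v v_top vw]].
- have [wf | wf] := boolP ((w, f) \in T).
    case/negP: (red w g wg); apply/deletableP; left.
    by exists f => //; apply: top_f_subset f_top wf.
  case: (dom w f wf) => [w_dom | f_dom].
    by have := w_dom g wg; rewrite (pref_asym (pw_pref w) fg).
  set u := (mu^-1)%g f.
  have uf : (u, f) \in T by have := mu_in u; rewrite permKV.
  have uw : u != w by apply: contraNneq wf => <-.
  case/top_fP: f_top => _ /(_ u (subsetP TE _ uf) uw).
  by rewrite (pref_asym (pf_pref f) (f_dom u uf)).
- have [vg | vg] := boolP ((v, g) \in T).
    case/negP: (red w g wg); apply/deletableP; right.
    by exists v => //; apply: top_w_subset v_top vg.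
  case: (dom v g vg) => [v_dom | g_dom]; last first.
    by have := g_dom w wg; rewrite (pref_asym (pf_pref g) vw).
  have mvg : mu v != g by apply: contraNneq vg => <-.
  case/top_wP: v_top => _ /(_ (mu v) (subsetP TE _ (mu_in v)) mvg).
  by rewrite (pref_asym (pw_pref v) (v_dom _ (mu_in v))).
Qed.

Lemma del_step_sound E E' : del_step pw pf E E' -> sound_removal E E'.
Proof.
case=> w [f [_ [[f_top ->] | [w_top ->]]]]; split=> [|x g]; rewrite ?subsetDl //;
  rewrite !inE => -> /=; rewrite andbT negbK => /andP[/eqP-> below]; split.
- by apply/deletableP; left; exists f.
- by apply: dominated_below_w below _ => h; rewrite !inE eqxx => /andP[].
- by apply/deletableP; right; exists w.
- by apply: dominated_below_f below _ => u; rewrite !inE eqxx => /andP[].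
Qed.

Lemma idua_round_sound E : sound_removal E (idua_round pw pf E).
Proof.
rewrite idua_roundE; split=> [|w f].
  by apply/subsetP => p; rewrite inE => /andP[].
rewrite inE => -> /=; rewrite negbK => del; split=> //.
case/deletableP: del => [[f' f'_top f'f] | [w' w'_top w'w]].
- apply: dominated_below_w f'f _ => h; rewrite inE => /andP[_]; apply: contra => f'h.
  by apply/deletableP; left; exists f'.
- apply: dominated_below_f w'w _ => u; rewrite inE => /andP[_]; apply: contra => w'u.
  by apply/deletableP; right; exists w'.
Qed.

Lemma idua_fixed_reduced E : idua_round pw pf E = E -> reduced E.
Proof. by move=> fixE w f; rewrite -{1}fixE idua_roundE inE => /andP[]. Qed.

Lemma maximal_reduced E : ~ (exists E', eff_step pw pf E E') -> reduced E.
Proof.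
move=> no_step w g wg.
apply/deletableP => -[[f f_top fg] | [v v_top vw]]; apply: no_step.
- exists (E :\: [set p | (p.1 == w) && pw w f p.2]); split.
    by exists w, f; split; [exact: top_f_in f_top | left].
  by apply/eqP => /setP/(_ (w, g)); rewrite !inE /= eqxx fg wg.
- exists (E :\: [set p | (p.2 == g) && pf g v p.1]); split.
    by exists v, g; split; [exact: top_w_in v_top | right].
  by apply/eqP => /setP/(_ (w, g)); rewrite !inE /= eqxx vw wg.
Qed.

Lemma eff_step_proper E E' : eff_step pw pf E E' -> E' \proper E.
Proof. by case=> /del_step_sound[sub _] ne; rewrite properEneq ne sub. Qed.

Lemma del_seq_inv (P : pairs -> Prop) :
  (forall E E', P E -> sound_removal E E' -> P E') ->
  forall s E, del_seq pw pf E s -> P E -> P (last E s).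
Proof.
move=> P_closed; elim=> // E' s IH E /= [[step _] steps] PE.
exact: IH steps (P_closed _ _ PE (del_step_sound step)).
Qed.

Lemma iter_idua_inv (P : pairs -> Prop) :
  (forall E E', P E -> sound_removal E E' -> P E') ->
  forall k E, P E -> P (iter k (idua_round pw pf) E).
Proof.
by move=> P_closed; apply: iter_inv => E PE; apply: P_closed PE (idua_round_sound E).
Qed.

End Lists.

Section TopChoices.
Variables (n : nat) (pw pf : 'I_n -> rel 'I_n).
Hypotheses (pw_pref : forall w, strict_pref (pw w))
           (pf_pref : forall f, strict_pref (pf f)).
Local Notation pairs := {set 'I_n * 'I_n}.
Implicit Types (E T : pairs) (w v u f g : 'I_n).

Lemma reduced_top_w_last T v f u :
  reduced pw pf T -> top_w pw T v f -> (u, f) \in T -> u != v -> pf f u v.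
Proof.
move=> red v_top uf uv; apply: (pref_flip (pf_pref f)); first by rewrite eq_sym.
by apply: contra (red u f uf) => vu; apply/deletableP; right; exists v.
Qed.

Lemma reduced_top_f_last T w f g :
  reduced pw pf T -> top_f pf T f w -> (w, g) \in T -> g != f -> pw w g f.
Proof.
move=> red w_top wg gf; apply: (pref_flip (pw_pref w)); first by rewrite eq_sym.
by apply: contra (red w g wg) => fg; apply/deletableP; left; exists f.
Qed.

Lemma top_matching_stable T :
  (forall w, exists f, (w, f) \in T) -> outside_dominated pw pf T ->
  (forall v f u, top_w pw T v f -> (u, f) \in T -> u != v -> pf f u v) ->
  exists2 mu : {perm 'I_n}, stable pw pf mu & forall w, top_w pw T w (mu w).
Proof.
move=> nonempty dom top_last.
have /fin_all_exists[top top_spec] : forall w, exists f, top_w pw T w f.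
  by move=> w; have [f wf] := nonempty w; exact: (exists_top_w pw_pref wf).
have top_inj : injective top.
  move=> v u vu; apply/eqP/negPn/negP => v_ne_u.
  have u_ne_v : u != v by rewrite eq_sym.
  have v_top := top_spec v; have u_top := top_spec u; rewrite -vu in u_top.
  have := top_last _ _ _ v_top (top_w_in u_top) u_ne_v.
  by rewrite (pref_asym (pf_pref _) (top_last _ _ _ u_top (top_w_in v_top) v_ne_u)).
exists (perm top_inj) => [v g | w]; last by rewrite permE.
apply/negP; rewrite /blocking permE => /andP[gv vu].
set u := ((perm top_inj)^-1)%g g in vu.
have u_top : top_w pw T u g.
  by rewrite -[g in top_w _ _ _ g](permKV (perm top_inj)) permE.
have [vg | vg] := boolP ((v, g) \in T).
  have g_ne : g != top v by apply/eqP => e; rewrite e (pref_irr (pw_pref v)) in gv.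
  case/top_wP: (top_spec v) => _ /(_ g vg g_ne).
  by rewrite (pref_asym (pw_pref v) gv).
case: (dom v g vg) => [v_dom | g_dom].
  by have := v_dom _ (top_w_in (top_spec v)); rewrite (pref_asym (pw_pref v) gv).
by have := g_dom u (top_w_in u_top); rewrite (pref_asym (pf_pref g) vu).
Qed.

End TopChoices.

Section GaleShapley.
Variables (n : nat) (pw pf : 'I_n -> rel 'I_n).
Hypotheses (pw_pref : forall w, strict_pref (pw w))
           (pf_pref : forall f, strict_pref (pf f)).
Local Notation pairs := {set 'I_n * 'I_n}.
Implicit Types (E G : pairs) (w v u f g : 'I_n).

(* A compressed run of worker-proposing deferred acceptance: [top_w pw E v f]
   means that v currently proposes to f, and in each round every firm rejects
   all workers it likes less than its best current proposer, whether or not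
   they have proposed yet. *)
Definition rejected E w f := [exists v, top_w pw E v f && pf f v w].

Definition gs_round E := [set p in E | ~~ rejected E p.1 p.2].

Definition held_or_intact E :=
  forall f, (exists v, top_w pw E v f) \/ (forall w, (w, f) \in E).

Lemma gs_round_sound E : sound_removal pw pf E (gs_round E).
Proof.
split=> [|w f]; first by apply/subsetP => p; rewrite inE => /andP[].
rewrite inE => -> /=; rewrite negbK => /existsP[v /andP[v_top vw]]; split.
  by apply/deletableP; right; exists v.
apply: (dominated_below_f _ pf_pref vw) => u; rewrite inE => /andP[_].
by apply: contra => vu; apply/existsP; exists v; rewrite v_top vu.
Qed.

Lemma gs_round_held_or_intact E : held_or_intact E -> held_or_intact (gs_round E).
Proof.
move=> inv f.
case: (boolP [exists v, top_w pw E v f]) => [/existsP[v0 v0_top] | /existsPn no_top].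
  have v0S : v0 \in [set v | top_w pw E v f] by rewrite inE.
  have [v vS v_max] := pref_max_exists (pf_pref f) v0S; rewrite inE in vS.
  left; exists v; apply: (top_w_subset (gs_round_sound E).1 vS).
  rewrite inE (top_w_in vS) /=; apply/existsPn => v'.
  apply/negP => /andP[v'_top v'v].
  have v'S : v' \in [set v | top_w pw E v f] by rewrite inE.
  have v'_ne : v' != v by apply/eqP => e; rewrite e (pref_irr (pf_pref f)) in v'v.
  by have := v_max v' v'S v'_ne; rewrite (pref_asym (pf_pref f) v'v).
have intact : forall w, (w, f) \in E.
  by case: (inv f) => // -[v v_top]; case/negP: (no_top v).
right=> w; rewrite inE intact /=; apply/existsPn => v.
by rewrite (negbTE (no_top v)).
Qed.

Lemma held_or_intact_nonempty E :
  held_or_intact E -> forall w, exists f, (w, f) \in E.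
Proof.
move=> inv w.
case: (boolP [exists f, (w, f) \in E]) => [/existsP // | /existsPn empty].
have /fin_all_exists[holder holder_top] : forall f, exists v, top_w pw E v f.
  by move=> f; case: (inv f) => // all; have := empty f; rewrite all.
have holder_inj : injective holder.
  by move=> f g e; apply: (top_w_uniq pw_pref (holder_top f)); rewrite e.
have /codomP[f w_holds] := inj_card_onto holder_inj (leqnn _) w.
by have := empty f; rewrite w_holds (top_w_in (holder_top f)).
Qed.

Lemma gs_fixed_top_last G : gs_round G = G ->
  forall v f u, top_w pw G v f -> (u, f) \in G -> u != v -> pf f u v.
Proof.
move=> fixG v f u v_top uf uv.
apply: (pref_flip (pf_pref f)); first by rewrite eq_sym.
move: uf; rewrite -fixG inE => /andP[_]; apply: contra => vu.
by apply/existsP; exists v; rewrite v_top vu.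
Qed.

Lemma stable_matching_exists : exists mu, stable pw pf mu.
Proof.
have [k fixG] := iter_fixed (fun E => (gs_round_sound E).1) (full n).
set G := iter k gs_round (full n) in fixG.
have [held domG] : held_or_intact G /\ outside_dominated pw pf G.
  apply: (iter_inv (P := fun E => held_or_intact E /\ outside_dominated pw pf E)).
    move=> E [heldE domE]; split; first exact: gs_round_held_or_intact.
    exact: sound_removal_dominated domE (gs_round_sound E).
  by split=> [f | w f]; [right=> w | ]; rewrite inE.
have [mu mu_stable _] := top_matching_stable pw_pref pf_pref
  (held_or_intact_nonempty held) domG (gs_fixed_top_last fixG).
by exists mu.
Qed.

End GaleShapley.

Definition swap_pairs (T1 T2 : finType) (E : {set T1 * T2}) : {set T2 * T1} :=
  [set p | (p.2, p.1) \in E].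

Section Duality.
Variable n : nat.
Implicit Types (E : {set 'I_n * 'I_n}) (pw pf r : 'I_n -> rel 'I_n).
Implicit Types (mu : {perm 'I_n}).

Lemma Lw_swap E a : Lw (swap_pairs E) a = Lf E a.
Proof. by apply/setP => b; rewrite !inE. Qed.

Lemma Lf_swap E a : Lf (swap_pairs E) a = Lw E a.
Proof. by apply/setP => b; rewrite !inE. Qed.

Lemma top_w_swap r E a b : top_w r (swap_pairs E) a b = top_f r E a b.
Proof. by rewrite /top_w /top_f Lw_swap. Qed.

Lemma top_f_swap r E a b : top_f r (swap_pairs E) a b = top_w r E a b.
Proof. by rewrite /top_f /top_w Lf_swap. Qed.

Lemma deletable_swap pw pf E w f :
  deletable pf pw (swap_pairs E) f w = deletable pw pf E w f.
Proof.
rewrite /deletable orbC; congr (_ || _); apply: eq_existsb => x.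
  by rewrite top_w_swap.
by rewrite top_f_swap.
Qed.

Lemma reduced_swap pw pf E : reduced pw pf E -> reduced pf pw (swap_pairs E).
Proof. by move=> red f w; rewrite inE deletable_swap; apply: red. Qed.

Lemma outside_dominated_swap pw pf E :
  outside_dominated pw pf E -> outside_dominated pf pw (swap_pairs E).
Proof.
move=> dom f w; rewrite inE => /dom[w_dom | f_dom]; [right | left] => x; rewrite inE.
  exact: w_dom.
exact: f_dom.
Qed.

Lemma matching_in_swap mu E :
  matching_in mu E -> matching_in (mu^-1)%g (swap_pairs E).
Proof.
by move=> mu_in f; rewrite inE /=; have := mu_in ((mu^-1)%g f); rewrite permKV.
Qed.

Lemma stable_swap pw pf mu : stable pw pf mu -> stable pf pw (mu^-1)%g.
Proof. by move=> mu_stable f w; rewrite /blocking invgK andbC; apply: mu_stable. Qed.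

End Duality.

Section ExtremePairs.
Variables (n : nat) (pw pf : 'I_n -> rel 'I_n).
Hypotheses (pw_pref : forall w, strict_pref (pw w))
           (pf_pref : forall f, strict_pref (pf f)).
Implicit Types (T : {set 'I_n * 'I_n}) (mu : {perm 'I_n}) (w f : 'I_n).

Lemma firm_top_matching_stable mu0 T :
  matching_in mu0 T -> outside_dominated pw pf T -> reduced pw pf T ->
  exists2 mu, stable pw pf mu & forall f, top_f pf T f ((mu^-1)%g f).
Proof.
move=> mu0_in dom red.
have nonempty f : exists w, (f, w) \in swap_pairs T.
  by exists ((mu0^-1)%g f); apply: matching_in_swap mu0_in f.
have top_last f w g :
    top_w pf (swap_pairs T) f w -> (g, w) \in swap_pairs T -> g != f -> pw w g f.
  by rewrite top_w_swap inE /=; apply: (reduced_top_f_last pw_pref red).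
have [nu nu_stable nu_top] :=
  top_matching_stable pf_pref pw_pref nonempty (outside_dominated_swap dom) top_last.
by exists (nu^-1)%g => [|f]; [apply: stable_swap | rewrite invgK -top_w_swap].
Qed.

Lemma stable_pair_of_extreme_w mu0 T w f :
  matching_in mu0 T -> outside_dominated pw pf T -> reduced pw pf T -> (w, f) \in T ->
  (forall g, (w, g) \in T -> ~~ pw w g f) \/ (forall g, (w, g) \in T -> ~~ pw w f g) ->
  exists mu, stable pw pf mu /\ mu w = f.
Proof.
move=> mu0_in dom red wf [f_first | f_last].
- have [mu mu_stable mu_top] := top_matching_stable pw_pref pf_pref
    (fun w => ex_intro _ (mu0 w) (mu0_in w)) dom
    (fun v f u => reduced_top_w_last pf_pref red).
  exists mu; split=> //; apply: (top_w_uniq pw_pref (mu_top w)); apply/top_wP.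
  by split=> // g wg gf; apply: (pref_flip (pw_pref w) gf (f_first g wg)).
- have [mu mu_stable mu_top] := firm_top_matching_stable mu0_in dom red.
  exists mu; split=> //; have := mu_top (mu w); rewrite permK => w_top.
  (* w is first on the list of mu w, so mu w is last on w's list, like f. *)
  apply/eqP/negPn/negP => ne; have f_ne : f != mu w by rewrite eq_sym.
  have := f_last _ (top_f_in w_top).
  by rewrite (reduced_top_f_last pw_pref red w_top wf f_ne).
Qed.

End ExtremePairs.

Section PairCases.
Variables (n : nat) (pw pf : 'I_n -> rel 'I_n).
Hypotheses (pw_pref : forall w, strict_pref (pw w))
           (pf_pref : forall f, strict_pref (pf f)).
Implicit Types (T : {set 'I_n * 'I_n}) (mu : {perm 'I_n}) (w f : 'I_n).

Lemma stable_pair_of_extreme_f mu0 T w f :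
  matching_in mu0 T -> outside_dominated pw pf T -> reduced pw pf T -> (w, f) \in T ->
  (forall u, (u, f) \in T -> ~~ pf f u w) \/ (forall u, (u, f) \in T -> ~~ pf f w u) ->
  exists mu, stable pw pf mu /\ mu w = f.
Proof.
move=> mu0_in dom red wf extreme.
have fw : (f, w) \in swap_pairs T by rewrite inE.
have extreme_swap : (forall u, (f, u) \in swap_pairs T -> ~~ pf f u w) \/
                    (forall u, (f, u) \in swap_pairs T -> ~~ pf f w u).
  by case: extreme => [w_first | w_last]; [left | right] => u; rewrite inE;
    [apply: w_first | apply: w_last].
have [nu [nu_stable nu_f]] := stable_pair_of_extreme_w pf_pref pw_pref
  (matching_in_swap mu0_in) (outside_dominated_swap dom) (reduced_swap red)
  fw extreme_swap.
by exists (nu^-1)%g; split; [apply: stable_swap | rewrite -nu_f permK].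
Qed.

Lemma reduced_pair_cases mu0 T w f :
  matching_in mu0 T -> outside_dominated pw pf T -> reduced pw pf T -> (w, f) \in T ->
  (exists mu, stable pw pf mu /\ mu w = f) \/
  (exists f1 f2 w1 w2,
     [/\ f1 \in Lw T w, f2 \in Lw T w, pw w f1 f & pw w f f2] /\
     [/\ w1 \in Lf T f, w2 \in Lf T f, pf f w1 w & pf f w w2]).
Proof.
move=> mu0_in dom red wf.
have extreme_w := stable_pair_of_extreme_w pw_pref pf_pref mu0_in dom red wf.
have extreme_f := stable_pair_of_extreme_f mu0_in dom red wf.
have [/exists_inP[f1 wf1 f1f] | /exists_inPn f_first] :=
  boolP [exists (g | (w, g) \in T), pw w g f]; last by left; apply: extreme_w; left.
have [/exists_inP[f2 wf2 ff2] | /exists_inPn f_last] :=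
  boolP [exists (g | (w, g) \in T), pw w f g]; last by left; apply: extreme_w; right.
have [/exists_inP[w1 w1f w1w] | /exists_inPn w_first] :=
  boolP [exists (u | (u, f) \in T), pf f u w]; last by left; apply: extreme_f; left.
have [/exists_inP[w2 w2f ww2] | /exists_inPn w_last] :=
  boolP [exists (u | (u, f) \in T), pf f w u]; last by left; apply: extreme_f; right.
by right; exists f1, f2, w1, w2; rewrite !inE.
Qed.

End PairCases.

Theorem lemma2 (n : nat) (pw pf : 'I_n -> rel 'I_n) :
  2 <= n ->
  (forall w, strict_pref (pw w)) ->
  (forall f, strict_pref (pf f)) ->
  exists Ls : {set 'I_n * 'I_n},
    is_normal_form pw pf Ls /\
    (* (1) every sequence of deletion steps terminates ... *)
    ~ (exists s : nat -> {set 'I_n * 'I_n},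
          s 0 = full n /\ forall i, eff_step pw pf (s i) (s i.+1)) /\
    (* ... and every maximal one ends at the normal form *)
    (forall s, maximal_del_seq pw pf s -> last (full n) s = Ls) /\
    (* (2) *)
    (forall w f, f \in Lw Ls w -> w \in Lf Ls f ->
       (exists mu : {perm 'I_n}, stable pw pf mu /\ mu w = f) \/
       (exists f1 f2 w1 w2,
          [/\ f1 \in Lw Ls w, f2 \in Lw Ls w, pw w f1 f & pw w f f2] /\
          [/\ w1 \in Lf Ls f, w2 \in Lf Ls f, pf f w1 w & pf f w w2])).
Proof.
move=> _ pw_pref pf_pref.
have [mu0 mu0_stable] := stable_matching_exists pw_pref pf_pref.
have inv_closed := sound_removal_invariant pw_pref pf_pref mu0_stable.
have inv_full : matching_in mu0 (full n) /\ outside_dominated pw pf (full n).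
  by split=> [w | w f]; rewrite inE.
have [k [fix_k first_k]] :=
  iter_first_fixed (full n) (fun E => (idua_round_sound pw_pref pf_pref E).1).
set Ls := iter k _ (full n) in fix_k first_k.
have [mu0_Ls dom_Ls] := iter_idua_inv pw_pref pf_pref inv_closed k inv_full.
have red_Ls := idua_fixed_reduced fix_k.
exists Ls; split; first by exists k.
split; [|split].
- case=> s [_ steps]; apply: (@no_proper_descent _ s) => i.
  exact: (eff_step_proper pw_pref pf_pref (steps i)).
- move=> s [seq_s no_step]; have red_s := maximal_reduced no_step.
  have [mu0_s dom_s] := del_seq_inv pw_pref pf_pref inv_closed seq_s inv_full.
  have keep_s := sound_removal_keeps_reduced pw_pref pf_pref mu0_s dom_s red_s.
  have keep_Ls := sound_removal_keeps_reduced pw_pref pf_pref mu0_Ls dom_Ls red_Ls.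
  apply/eqP; rewrite eqEsubset (iter_idua_inv pw_pref pf_pref keep_s k (subsetT _)).
  exact: (del_seq_inv pw_pref pf_pref keep_Ls seq_s (subsetT _)).
- move=> w f; rewrite inE => wf _.
  exact: (reduced_pair_cases pw_pref pf_pref mu0_Ls dom_Ls red_Ls wf).
Qed.
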